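(* Let $G_{\|v_0}$ be an initialized prefix-independent game, let $\epsilon\ge0$, let $\lambda^*$ be the least $\epsilon$-fixed point of the negotiation function of $G$, and let $\xi$ be a play starting in $v_0$. If there exists an $\epsilon$-SPE $\bar\sigma$ in $G_{\|v_0}$ such that $\langle\bar\sigma\rangle_{v_0}=\xi$, then $\xi$ is $\lambda^*$-consistent. Conversely, if $G$ is with steady negotiation and $\xi$ is $\lambda^*$-consistent, then there exists an $\epsilon$-SPE $\bar\sigma$ in $G_{\|v_0}$ with $\langle\bar\sigma\rangle_{v_0}=\xi$.
   Context: A game is a tuple $G=(\Pi,V,(V_i)_{i\in\Pi},E,\mu)$ where $\Pi$ is a finite set of players, $(V,E)$ is a finite directed graph in which every vertex has at least one outgoing edge, $(V_i)_{i\in\Pi}$ is a partition of $V$, and $\mu:V^\omega\to\mathbb{R}^\Pi$ is the outcome function. Plays (infinite paths), histories (finite nonempty paths), strategies, profiles, compatibility and $\langle\bar\sigma\rangle_v$ (the play from $v$ generated by a complete profile) are as usual; $G_{\|v_0}$ is $G$ initialized at $v_0$; $-i$ denotes $\Pi\setminus\{i\}$; for a history $hv$, $\bar\sigma_{\|hv}$ is the profile in $G_{\|v}$ with $\sigma_{j\|hv}(h')=\sigma_j(hh')$. $G$ is prefix-independent if $\mu(h\rho)=\mu(\rho)$ for every history $h$ and play $\rho$. For $\epsilon\ge0$, a profile $\bar\sigma$ in $G_{\|v_0}$ is an $\epsilon$-SPE if for every history $hv$ of $G_{\|v_0}$, every player $i$ and every strategy $\sigma'_i$, $\mu_i(h\langle\bar\sigma_{-i\|hv},\sigma'_{i\|hv}\rangle_v)\le\mu_i(h\langle\bar\sigma_{\|hv}\rangle_v)+\epsilon$.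 A requirement is a map $\lambda:V\to\mathbb{R}\cup\{\pm\infty\}$, ordered pointwise. A play $\rho$ is $\lambda$-consistent if for every $i\in\Pi$ and $n$ with $\rho_n\in V_i$, $\mu_i(\rho_n\rho_{n+1}\cdots)\ge\lambda(\rho_n)$. $\lambda\mathrm{Rat}_i(v)$ is the set of profiles $\bar\sigma_{-i}$ in $G_{\|v}$ for which there exists $\sigma_i$ such that for every history $hw$ from $v$ compatible with $\bar\sigma_{-i}$, $\langle\bar\sigma_{\|hw}\rangle_w$ is $\lambda$-consistent. The negotiation function: for $i\in\Pi$, $v\in V_i$, $\mathrm{nego}(\lambda)(v)=\inf_{\bar\sigma_{-i}\in\lambda\mathrm{Rat}_i(v)}\sup_{\sigma_i}\mu_i(\langle\bar\sigma_{-i},\sigma_i\rangle_v)$, $\inf\emptyset=+\infty$. $\lambda$ is an $\epsilon$-fixed point of $\mathrm{nego}$ if $\lambda(v)-\epsilon\le\mathrm{nego}(\lambda)(v)\le\lambda(v)+\epsilon$ for all $v$ (with $\pm\infty\pm\epsilon=\pm\infty$); a least one exists. $G$ is with steady negotiation if for every player $i$, vertex $v$ and requirement $\lambda$, the set $\{\sup_{\sigma_i}\mu_i(\langle\bar\sigma_{-i},\sigma_i\rangle_v)\mid\bar\sigma_{-i}\in\lambda\mathrm{Rat}_i(v)\}$ is empty or has a minimum. *)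

From Stdlib Require Import Reals List Arith FinFun.
From Coquelicot Require Import Rbar Lub.
Import ListNotations.
Open Scope R_scope.

Record game := Game {
  Pl : Type;
  V : Type;
  Pl_eq_dec : forall a b : Pl, {a = b} + {a <> b};
  Pl_fin : FinFun.Finite Pl;
  V_fin : FinFun.Finite V;
  owner : V -> Pl;
  E : V -> V -> Prop;
  E_total : forall v, exists w, E v w;
  mu : (nat -> V) -> Pl -> R
}.

Section G.
Variable G : game.

Fixpoint is_path (l : list (V G)) : Prop :=
  match l with
  | x :: ((y :: _) as t) => E G x y /\ is_path t
  | _ => True
  end.

(* (h, v) represents the history h·v (last vertex v); it is a history of
   G_{|v0} when h ++ [v] is a path starting at v0 *)
Definition is_hist (v0 : V G) (h : list (V G)) (v : V G) : Prop :=
  is_path (h ++ [v]) /\ hd_error (h ++ [v]) = Some v0.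

Definition is_play (rho : nat -> V G) : Prop := forall n, E G (rho n) (rho (S n)).

(* strategies: a strategy of player i maps a history h·v with v in V_i to a
   successor of v (values on other histories are irrelevant) *)
Definition strat := list (V G) -> V G -> V G.
Definition is_strategy (i : Pl G) (s : strat) : Prop :=
  forall h v, owner G v = i -> E G v (s h v).

Definition profile := Pl G -> strat.
Definition is_profile (s : profile) : Prop := forall i, is_strategy i (s i).

(* partial profile sigma_{-i}: a profile whose i-th component is ignored *)
Definition is_profile_minus (i : Pl G) (s : profile) : Prop :=
  forall j, j <> i -> is_strategy j (s j).

Definition upd (s : profile) (i : Pl G) (tau : strat) : profile :=
  fun j => if Pl_eq_dec G j i then tau else s j.

(* the first n+1 vertices of <sigma>_v, as (h, last) *)
Fixpoint hist (s : profile) (v : V G) (n : nat) : list (V G) * V G :=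
  match n with
  | O => ([], v)
  | S n' => let (h, w) := hist s v n' in (h ++ [w], s (owner G w) h w)
  end.

Definition outcome (s : profile) (v : V G) : nat -> V G :=
  fun n => snd (hist s v n).

Definition residual (s : profile) (h : list (V G)) : profile :=
  fun j l w => s j (h ++ l) w.

Definition app_play (h : list (V G)) (rho : nat -> V G) : nat -> V G :=
  fun n => match nth_error h n with
           | Some x => x
           | None => rho (n - length h)%nat
           end.

Definition shift (rho : nat -> V G) (n : nat) : nat -> V G :=
  fun k => rho (n + k)%nat.

Definition prefix_independent : Prop :=
  forall h rho i, mu G (app_play h rho) i = mu G rho i.

Definition is_eps_SPE (eps : R) (v0 : V G) (s : profile) : Prop :=
  is_profile s /\
  forall h v, is_hist v0 h v ->
  forall i (s' : strat), is_strategy i s' ->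
    mu G (app_play h (outcome (residual (upd s i s') h) v)) i
    <= mu G (app_play h (outcome (residual s h) v)) i + eps.

Definition requirement := V G -> Rbar.

Definition consistent (lam : requirement) (rho : nat -> V G) : Prop :=
  forall n, Rbar_le (lam (rho n)) (Finite (mu G (shift rho n) (owner G (rho n)))).

Definition compatible_minus (i : Pl G) (s : profile) (l : list (V G)) : Prop :=
  forall k x y, nth_error l k = Some x -> nth_error l (S k) = Some y ->
    owner G x <> i -> y = s (owner G x) (firstn k l) x.

Definition lamRat (lam : requirement) (i : Pl G) (v : V G) (s : profile) : Prop :=
  is_profile_minus i s /\
  exists tau, is_strategy i tau /\
    forall h w, is_hist v h w -> compatible_minus i s (h ++ [w]) ->
      consistent lam (outcome (residual (upd s i tau) h) w).

Definition best_resp_val (i : Pl G) (v : V G) (s : profile) : Rbar :=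
  Rbar_lub (fun x => exists tau, is_strategy i tau /\
                      x = Finite (mu G (outcome (upd s i tau) v) i)).

Definition nego_set (lam : requirement) (i : Pl G) (v : V G) (x : Rbar) : Prop :=
  exists s, lamRat lam i v s /\ x = best_resp_val i v s.

(* negotiation function (inf of the empty set is +oo) *)
Definition nego (lam : requirement) : requirement :=
  fun v => Rbar_glb (nego_set lam (owner G v) v).

Definition req_le (l1 l2 : requirement) : Prop := forall v, Rbar_le (l1 v) (l2 v).

Definition eps_fixed_point (eps : R) (lam : requirement) : Prop :=
  forall v, Rbar_le (Rbar_minus (lam v) (Finite eps)) (nego lam v) /\
            Rbar_le (nego lam v) (Rbar_plus (lam v) (Finite eps)).

Definition least_eps_fixed_point (eps : R) (lam : requirement) : Prop :=
  eps_fixed_point eps lam /\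
  forall lam', eps_fixed_point eps lam' -> req_le lam lam'.

Definition steady_negotiation : Prop :=
  forall (i : Pl G) (v : V G) (lam : requirement),
    (forall x, ~ nego_set lam i v x) \/
    (exists m, nego_set lam i v m /\ forall x, nego_set lam i v x -> Rbar_le m x).

End G.

From Stdlib Require Import Reals Lra List Lia FunctionalExtensionality ClassicalEpsilon Classical.
From Coquelicot Require Import Rbar Lub.
Import ListNotations.
Open Scope R_scope.

(* - Plays and histories: play_after s h v = h·<s_{|hv}>_v is the play
     compared in the definition of eps-SPE; prefix independence lets us drop
     or add finite prefixes of plays.
   - Necessity: lamSPE w, the infimum of the payoffs the owner of w receives
     after a history ending in w in some eps-SPE, is an eps-fixed point
     (continuations of an eps-SPE form lamSPE-rational environments in which
     deviations gain at most eps).  Plays of eps-SPEs are lamSPE-consistent,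
     hence lam*-consistent since lam* <= lamSPE.
   - Sufficiency: from a lam*-consistent play xi we build sigma, which
     follows xi and answers a deviation at w by an optimal lam*-rational
     punishment of the owner of w (it exists by steady negotiation); a
     punished player deviating again is re-punished only at a vertex of
     smaller negotiated value.  An invariant on histories makes the planned
     continuation of sigma lam*-consistent.  A deviator ends up punished from
     some u with payoff <= nego u (induction on the rank of nego u among the
     finitely many vertices), and nego u <= lam* + eps <= his payoff under
     sigma + eps. *)

Section Plays.
Variable G : game.

Definition pref (g : nat -> V G) (n : nat) : list (V G) := map g (seq 0 n).

Lemma pref_S g n : pref g (S n) = pref g n ++ [g n].
Proof. unfold pref. rewrite seq_S, map_app. reflexivity. Qed.

Lemma pref_length g n : length (pref g n) = n.
Proof. unfold pref. rewrite length_map, length_seq. reflexivity. Qed.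

Lemma pref_nth g n k : (k < n)%nat -> nth_error (pref g n) k = Some (g k).
Proof.
  intros Hk. unfold pref. rewrite nth_error_map, nth_error_seq.
  destruct (Nat.ltb_spec k n); [reflexivity | lia].
Qed.

Lemma pref_nth_none g n k : (n <= k)%nat -> nth_error (pref g n) k = None.
Proof. intros Hk. apply nth_error_None. rewrite pref_length. lia. Qed.

Lemma pref_add g a b : pref g (a + b) = pref g a ++ pref (fun k => g (a + k)%nat) b.
Proof.
  induction b as [|b IH].
  - rewrite Nat.add_0_r, app_nil_r. reflexivity.
  - rewrite Nat.add_succ_r, !pref_S, IH, app_assoc. reflexivity.
Qed.

Lemma pref_ext g1 g2 n : (forall k, (k < n)%nat -> g1 k = g2 k) -> pref g1 n = pref g2 n.
Proof.
  intros H. unfold pref. apply map_ext_in. intros a Ha. apply in_seq in Ha. apply H. lia.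
Qed.

Lemma skipn_len_app {A} (h l : list A) : skipn (length h) (h ++ l) = l.
Proof. induction h; simpl; auto. Qed.

Lemma firstn_len_app {A} (l r : list A) : firstn (length l) (l ++ r) = l.
Proof. induction l as [|a l IH]; simpl; [reflexivity | now rewrite IH]. Qed.

Lemma skipn_pref g o M : (o <= M)%nat -> skipn o (pref g M) = pref (shift G g o) (M - o).
Proof.
  intros H. replace M with (o + (M - o))%nat at 1 by lia. rewrite pref_add.
  pose proof (skipn_len_app (pref g o) (pref (fun k => g (o + k)%nat) (M - o))) as E1.
  rewrite pref_length in E1. exact E1.
Qed.

Lemma firstn_pref g k K : (k <= K)%nat -> firstn k (pref g K) = pref g k.
Proof.
  intros H. replace K with (k + (K - k))%nat by lia. rewrite pref_add.
  pose proof (firstn_len_app (pref g k) (pref (fun j => g (k + j)%nat) (K - k))) as E1.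
  rewrite pref_length in E1. exact E1.
Qed.

Lemma app_play_pref g N : app_play G (pref g N) (shift G g N) = g.
Proof.
  apply functional_extensionality. intros k. unfold app_play, shift.
  destruct (Nat.ltb_spec k N).
  - rewrite pref_nth by lia. reflexivity.
  - rewrite pref_nth_none by lia. rewrite pref_length. f_equal. lia.
Qed.

Lemma mu_shift : prefix_independent G -> forall g N i, mu G (shift G g N) i = mu G g i.
Proof. intros PI g N i. rewrite <- (PI (pref g N) (shift G g N) i), app_play_pref. reflexivity. Qed.

Lemma rec_unique (F : list (V G) -> V G -> V G) g1 g2 n0 :
  (forall k, (k <= n0)%nat -> g1 k = g2 k) ->
  (forall N, (n0 <= N)%nat -> g1 (S N) = F (pref g1 N) (g1 N)) ->
  (forall N, (n0 <= N)%nat -> g2 (S N) = F (pref g2 N) (g2 N)) ->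
  forall k, g1 k = g2 k.
Proof.
  intros H0 H1 H2.
  assert (Hup : forall N k, (k <= N)%nat -> g1 k = g2 k).
  { induction N as [|N IH]; intros k Hk.
    - apply H0. lia.
    - destruct (Nat.leb_spec k N) as [Hle|Hgt]; [now apply IH|].
      replace k with (S N) by lia.
      destruct (Nat.leb_spec (S N) n0); [apply H0; lia|].
      rewrite H1, H2 by lia. f_equal; [apply pref_ext; intros; apply IH; lia | apply IH; lia]. }
  intros k. apply (Hup k k). lia.
Qed.

Lemma hist_fst s v n : fst (hist G s v n) = pref (outcome G s v) n.
Proof.
  induction n as [|n IH]; simpl; [reflexivity|].
  rewrite pref_S. unfold outcome at 2. destruct (hist G s v n) as [h w]. simpl in *.
  rewrite IH. reflexivity.
Qed.

Lemma outcome_S s v n : outcome G s v (S n) =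
  s (owner G (outcome G s v n)) (pref (outcome G s v) n) (outcome G s v n).
Proof.
  unfold outcome at 1. simpl. rewrite <- hist_fst. unfold outcome.
  destruct (hist G s v n) as [h w]. reflexivity.
Qed.

(* play_after s h v = h·<s_{|hv}>_v, the play of G followed by s after the
   history h·v; this is the play compared in the definition of eps-SPE. *)
Definition play_after (s : profile G) h v : nat -> V G :=
  app_play G h (outcome G (residual G s h) v).

Lemma play_after_ge s h v m :
  play_after s h v (length h + m)%nat = outcome G (residual G s h) v m.
Proof. unfold play_after, app_play. rewrite (proj2 (nth_error_None h _)) by lia. f_equal. lia. Qed.

Lemma play_after_lt s h v k :
  (k < length h)%nat -> nth_error h k = Some (play_after s h v k).
Proof.
  intros Hk. unfold play_after, app_play. destruct (nth_error h k) eqn:E; [reflexivity|].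
  apply nth_error_None in E. lia.
Qed.

Lemma play_after_pref0 s h v : pref (play_after s h v) (length h) = h.
Proof.
  apply nth_error_ext. intros k. destruct (Nat.ltb_spec k (length h)).
  - rewrite pref_nth by lia. symmetry. now apply play_after_lt.
  - rewrite pref_nth_none by lia. symmetry. apply nth_error_None. lia.
Qed.

Lemma play_after_len s h v : play_after s h v (length h) = v.
Proof. rewrite <- (Nat.add_0_r (length h)), play_after_ge. reflexivity. Qed.

Lemma play_after_presv s h v : pref (play_after s h v) (S (length h)) = h ++ [v].
Proof. rewrite pref_S, play_after_pref0, play_after_len. reflexivity. Qed.

Lemma play_after_pref s h v m :
  pref (play_after s h v) (length h + m) = h ++ pref (outcome G (residual G s h) v) m.
Proof.
  rewrite pref_add, play_after_pref0. f_equal. apply pref_ext. intros k _. apply play_after_ge.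
Qed.

Lemma play_after_rec s h v N : (length h <= N)%nat ->
  play_after s h v (S N) =
  s (owner G (play_after s h v N)) (pref (play_after s h v) N) (play_after s h v N).
Proof.
  intros HN. replace N with (length h + (N - length h))%nat by lia.
  rewrite <- Nat.add_succ_r, !play_after_ge, play_after_pref, outcome_S. reflexivity.
Qed.

Lemma play_after_nil s v k : play_after s [] v k = outcome G s v k.
Proof. exact (play_after_ge s [] v k). Qed.

Lemma play_after_restart s h v N : (length h <= N)%nat ->
  forall k, play_after s (pref (play_after s h v) N) (play_after s h v N) k = play_after s h v k.
Proof.
  intros HN. set (g := play_after s h v).
  apply (rec_unique (fun H x => s (owner G x) H x) _ _ N).
  - intros k Hk. destruct (Nat.eqb_spec k N) as [->|Hne].
    + pose proof (play_after_len s (pref g N) (g N)) as E1. rewrite pref_length in E1. exact E1.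
    + pose proof (play_after_lt s (pref g N) (g N) k) as E1. rewrite pref_length, pref_nth in E1 by lia.
      assert (Hk' : (k < N)%nat) by lia. specialize (E1 Hk'). now inversion E1.
  - intros M HM. apply play_after_rec. now rewrite pref_length.
  - intros M HM. apply play_after_rec. lia.
Qed.

Lemma play_after_suffix s h v N : (length h <= N)%nat -> forall m,
  outcome G (residual G s (pref (play_after s h v) N)) (play_after s h v N) m =
  play_after s h v (N + m).
Proof.
  intros HN m. rewrite <- (play_after_restart s h v N HN (N + m)).
  rewrite <- play_after_ge, pref_length. reflexivity.
Qed.

Lemma is_path_nth l : is_path G l <->
  forall k x y, nth_error l k = Some x -> nth_error l (S k) = Some y -> E G x y.
Proof.
  induction l as [|a [|b l] IH].
  - split; [intros _ [|k] x y H; discriminate | intros; exact I].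
  - split; [intros _ [|[|k]] x y _ H; discriminate | intros; exact I].
  - change (is_path G (a :: b :: l)) with (E G a b /\ is_path G (b :: l)). split.
    + intros [Hab Hp] [|k] x y Hx Hy.
      * simpl in Hx, Hy. inversion Hx; inversion Hy; subst; auto.
      * exact (proj1 IH Hp k x y Hx Hy).
    + intros H. split; [apply (H 0%nat); reflexivity|].
      apply IH. intros k x y Hx Hy. apply (H (S k)); auto.
Qed.

Lemma skipn_path l o : is_path G l -> is_path G (skipn o l).
Proof.
  rewrite !is_path_nth. intros H k x y Hx Hy. rewrite nth_error_skipn in Hx, Hy.
  apply (H (o + k)%nat); auto. now rewrite <- Nat.add_succ_r.
Qed.

Lemma skipn_hd {A} o (l : list A) : hd_error (skipn o l) = nth_error l o.
Proof. revert l; induction o; destruct l; simpl; auto. Qed.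

Lemma hist_nil v : is_hist G v [] v.
Proof. split; simpl; auto. Qed.

Lemma hist_pref u g N : g 0%nat = u -> (forall k, (k < N)%nat -> E G (g k) (g (S k))) ->
  is_hist G u (pref g N) (g N).
Proof.
  intros H0 HE. unfold is_hist. rewrite <- pref_S. split.
  - apply is_path_nth. intros k x y Hx Hy.
    destruct (Nat.ltb_spec (S k) (S N)).
    + rewrite pref_nth in Hx, Hy by lia. inversion Hx; inversion Hy; subst. apply HE. lia.
    + rewrite pref_nth_none in Hy by lia. discriminate.
  - unfold pref. simpl. now rewrite H0.
Qed.

Lemma path_join l1 x l2 : is_path G (l1 ++ [x]) -> is_path G (x :: l2) -> is_path G (l1 ++ x :: l2).
Proof.
  induction l1 as [|a l1 IH]; simpl; auto.
  destruct l1 as [|b l1]; simpl.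
  - intros [H1 _] H2. split; auto.
  - intros [H1 H3] H2. split; auto. apply IH; auto.
Qed.

Lemma hist_join u h w h' w' : is_hist G u h w -> is_hist G w h' w' -> is_hist G u (h ++ h') w'.
Proof.
  intros [P1 D1] [P2 D2]. destruct h' as [|a t].
  - simpl in D2. inversion D2. subst. rewrite app_nil_r. split; auto.
  - simpl in D2. inversion D2; subst. split.
    + rewrite <- app_assoc. simpl. apply path_join; auto.
    + destruct h; simpl in *; auto.
Qed.

Lemma hist_one w y : E G w y -> is_hist G w [w] y.
Proof. intros H. split; [simpl; auto | reflexivity]. Qed.

Lemma hist_snoc_inv u h w' w : is_hist G u (h ++ [w']) w -> is_hist G u h w' /\ E G w' w.
Proof.
  intros [Hp Hd]. rewrite is_path_nth in Hp. split; [split|].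
  - apply is_path_nth. intros k x y Hx Hy. apply (Hp k); rewrite nth_error_app1; auto;
      apply nth_error_Some; congruence.
  - destruct h; simpl in *; auto.
  - rewrite <- app_assoc in Hp. apply (Hp (length h)); rewrite nth_error_app2 by lia.
    + now rewrite Nat.sub_diag.
    + now replace (S (length h) - length h)%nat with 1%nat by lia.
Qed.

Lemma play_after_0 s u h v : is_hist G u h v -> play_after s h v 0%nat = u.
Proof.
  intros [_ Hd]. rewrite <- (play_after_presv s) in Hd. unfold pref in Hd. simpl in Hd.
  now inversion Hd.
Qed.

Lemma is_profile_upd s i t : is_profile G s -> is_strategy G i t -> is_profile G (upd G s i t).
Proof.
  intros Hs Ht j H x Hx. unfold upd. destruct (Pl_eq_dec G j i) as [->|]; [now apply Ht | now apply Hs].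
Qed.

Lemma play_after_edges s u h v : is_hist G u h v -> is_profile G s -> forall k,
  E G (play_after s h v k) (play_after s h v (S k)).
Proof.
  intros Hh Hs k. destruct (Nat.ltb_spec k (length h)).
  - destruct Hh as [Hp _]. rewrite <- (play_after_presv s) in Hp.
    apply (proj1 (is_path_nth _) Hp k); apply pref_nth; lia.
  - rewrite play_after_rec by lia. now apply Hs.
Qed.

Lemma play_after_hist s u h v : is_hist G u h v -> is_profile G s -> forall N,
  is_hist G u (pref (play_after s h v) N) (play_after s h v N).
Proof.
  intros Hh Hs N. apply hist_pref; [now apply (play_after_0 s u h v) |].
  intros k _. now apply (play_after_edges s u h v).
Qed.

Lemma residual_app s h h' : residual G (residual G s h) h' = residual G s (h ++ h').
Proof.
  unfold residual. do 3 (apply functional_extensionality; intro). now rewrite app_assoc.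
Qed.

Lemma upd_self s d : upd G s d (s d) = s.
Proof.
  apply functional_extensionality; intro j. unfold upd.
  destruct (Pl_eq_dec G j d); subst; auto.
Qed.

Lemma skipn_app_le {A} o (h r : list A) : (o <= length h)%nat -> skipn o (h ++ r) = skipn o h ++ r.
Proof. intros H. rewrite skipn_app. now replace (o - length h)%nat with 0%nat by lia. Qed.

Lemma firstn_le_app {A} k (l r : list A) : (k <= length l)%nat -> firstn k (l ++ r) = firstn k l.
Proof.
  intros H. rewrite firstn_app. replace (k - length l)%nat with 0%nat by lia. apply app_nil_r.
Qed.

Lemma compat_snoc d (sg : profile G) l w y : compatible_minus G d sg (l ++ [w]) ->
  (owner G w <> d -> y = sg (owner G w) l w) -> compatible_minus G d sg (l ++ [w; y]).
Proof.
  intros Hc Hy k x z Hx Hz Ho.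
  destruct (Nat.ltb_spec k (length l)).
  - rewrite nth_error_app1 in Hx by lia.
    assert (Hz' : nth_error (l ++ [w]) (S k) = Some z).
    { destruct (Nat.ltb_spec (S k) (length l)).
      - rewrite nth_error_app1 in Hz |- * by lia. auto.
      - rewrite nth_error_app2 in Hz |- * by lia.
        replace (S k - length l)%nat with 0%nat in * by lia. auto. }
    rewrite (Hc k x z) by (try rewrite nth_error_app1 by lia; auto).
    rewrite firstn_le_app by lia. now rewrite (firstn_le_app k l [w; y]) by lia.
  - rewrite nth_error_app2 in Hx, Hz by lia.
    destruct (Nat.eqb_spec k (length l)) as [->|].
    + rewrite Nat.sub_diag in Hx. replace (S (length l) - length l)%nat with 1%nat in Hz by lia.
      simpl in Hx, Hz. inversion Hx; inversion Hz; subst. rewrite firstn_len_app. auto.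
    + replace (S k - length l)%nat with (S (S (k - length l - 1))) in Hz by lia. simpl in Hz.
      destruct (k - length l - 1)%nat; discriminate.
Qed.

End Plays.

Lemma lub_ub (A : Rbar -> Prop) x : A x -> Rbar_le x (Rbar_lub A).
Proof. intros H. exact (proj1 (proj2_sig (Rbar_ex_lub A)) x H). Qed.

Lemma lub_least (A : Rbar -> Prop) b : (forall x, A x -> Rbar_le x b) -> Rbar_le (Rbar_lub A) b.
Proof. intros H. exact (proj2 (proj2_sig (Rbar_ex_lub A)) b H). Qed.

Lemma glb_lb (A : Rbar -> Prop) x : A x -> Rbar_le (Rbar_glb A) x.
Proof. intros H. exact (proj1 (proj2_sig (Rbar_ex_glb A)) x H). Qed.

Lemma glb_greatest (A : Rbar -> Prop) b : (forall x, A x -> Rbar_le b x) -> Rbar_le b (Rbar_glb A).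
Proof. intros H. exact (proj2 (proj2_sig (Rbar_ex_glb A)) b H). Qed.

(* An empty set has infimum +oo. *)
Lemma glb_lt_inhabited (A : Rbar -> Prop) : Rbar_lt (Rbar_glb A) p_infty -> exists x, A x.
Proof.
  intros H. apply NNPP. intros Hn. apply (Rbar_lt_not_le _ _ H).
  apply glb_greatest. intros x Hx. exfalso. apply Hn. eauto.
Qed.

Lemma minus_le x e : 0 <= e -> Rbar_le (Rbar_minus x (Finite e)) x.
Proof. intros He. destruct x; simpl; auto. lra. Qed.

Lemma glb_plus_ge (A : Rbar -> Prop) a e :
  (forall x, A x -> Rbar_le a (Rbar_plus x (Finite e))) ->
  Rbar_le a (Rbar_plus (Rbar_glb A) (Finite e)).
Proof.
  intros H. destruct a as [r| |]; [| |simpl; auto].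
  - assert (Rbar_le (Finite (r - e)) (Rbar_glb A)).
    { apply glb_greatest. intros x Hx. specialize (H x Hx). destruct x; simpl in *; auto. lra. }
    destruct (Rbar_glb A); simpl in *; auto. lra.
  - assert (Rbar_le p_infty (Rbar_glb A)).
    { apply glb_greatest. intros x Hx. specialize (H x Hx). destruct x; simpl in *; auto. }
    destruct (Rbar_glb A); simpl in *; auto.
Qed.

Section Negotiation.
Variable G : game.

Lemma compat_single i s v : compatible_minus G i s [v].
Proof. intros [|k] x y _ Hy; discriminate. Qed.

(* The negotiation function never lowers a requirement: a lambda-rational
   environment lets the player reach, from v itself, a lambda-consistent play. *)
Lemma nego_ge lam v : Rbar_le (lam v) (nego G lam v).
Proof.
  apply glb_greatest. intros x [s [[Hs [tau [Ht Hc]]] ->]].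
  specialize (Hc [] v (hist_nil G v) (compat_single _ _ _) 0%nat).
  eapply Rbar_le_trans; [exact Hc|]. apply lub_ub. exists tau. auto.
Qed.

Lemma nego_fixed_le eps lam w m : eps_fixed_point G eps lam ->
  Rbar_le (lam w) (Finite m) -> Rbar_le (nego G lam w) (Finite (m + eps)).
Proof.
  intros Hfix H. eapply Rbar_le_trans; [apply (Hfix w)|].
  change (Finite (m + eps)) with (Rbar_plus (Finite m) (Finite eps)).
  apply Rbar_plus_le_compat; [exact H | apply Rbar_le_refl].
Qed.

Definition default_succ (w : V G) : V G :=
  proj1_sig (constructive_indefinite_description _ (E_total G w)).

Lemma default_succ_edge w : E G w (default_succ w).
Proof. unfold default_succ. destruct (constructive_indefinite_description _ _). auto. Qed.

(* A play from u along which every player other than i obeys sigma_{-i} is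
   generated by sigma_{-i} and some strategy of i; so i's payoff on it is
   at most i's best-response value against sigma_{-i}. *)
Lemma compatible_play_le_best_resp i (sg : profile G) u r :
  is_play G r -> r 0%nat = u ->
  (forall m, owner G (r m) <> i -> r (S m) = sg (owner G (r m)) (pref G r m) (r m)) ->
  Rbar_le (Finite (mu G r i)) (best_resp_val G i u sg).
Proof.
  intros Hr H0 Hcomp.
  set (tau := fun (l : list (V G)) (x : V G) =>
    if excluded_middle_informative (E G x (r (S (length l))))
    then r (S (length l)) else default_succ x).
  assert (Ht : is_strategy G i tau).
  { intros l x _. unfold tau. destruct (excluded_middle_informative _); auto. apply default_succ_edge. }
  assert (Hout : forall m, outcome G (upd G sg i tau) u m = r m).
  { apply (rec_unique G (fun H x => upd G sg i tau (owner G x) H x) _ _ 0%nat).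
    - intros k Hk. replace k with 0%nat by lia. now rewrite H0.
    - intros M _. apply outcome_S.
    - intros m _. unfold upd. destruct (Pl_eq_dec G (owner G (r m)) i); [|now apply Hcomp].
      unfold tau. rewrite pref_length. destruct (excluded_middle_informative _) as [|Hn]; auto.
      exfalso. apply Hn, Hr. }
  replace (mu G r i) with (mu G (outcome G (upd G sg i tau) u) i)
    by (f_equal; apply functional_extensionality; exact Hout).
  apply lub_ub. exists tau. split; auto.
Qed.

End Negotiation.

Section SPEOutcomes.
Variable G : game.
Variable eps : R.
Hypothesis PI : prefix_independent G.
Hypothesis Heps : 0 <= eps.

Definition spe_payoffs (w : V G) (x : Rbar) : Prop :=
  exists u s h, is_eps_SPE G eps u s /\ is_hist G u h w /\
    x = Finite (mu G (outcome G (residual G s h) w) (owner G w)).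

Definition lamSPE : requirement G := fun w => Rbar_glb (spe_payoffs w).

(* Every continuation of an eps-SPE is lamSPE-consistent: each of its
   suffixes is again the continuation after a longer history. *)
Lemma spe_continuation_consistent u s h w : is_eps_SPE G eps u s -> is_hist G u h w ->
  consistent G lamSPE (outcome G (residual G s h) w).
Proof.
  intros Hs Hh n. set (g := play_after G s h w).
  assert (Hsuf : shift G (outcome G (residual G s h) w) n =
     outcome G (residual G s (pref G g (length h + n))) (g (length h + n)%nat)).
  { apply functional_extensionality. intro k. unfold shift, g.
    rewrite play_after_suffix by lia. rewrite <- play_after_ge. f_equal. lia. }
  assert (Hn : outcome G (residual G s h) w n = g (length h + n)%nat)
    by (unfold g; now rewrite play_after_ge).
  rewrite Hsuf, Hn. apply glb_lb. exists u, s, (pref G g (length h + n)).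
  split; [exact Hs|]. split; [|reflexivity].
  apply (play_after_hist G s u h w Hh (proj1 Hs)).
Qed.

Lemma spe_best_response u s h w : is_eps_SPE G eps u s -> is_hist G u h w ->
  Rbar_le (best_resp_val G (owner G w) w (residual G s h))
    (Finite (mu G (outcome G (residual G s h) w) (owner G w) + eps)).
Proof.
  intros [_ Hs] Hh. apply lub_least. intros x [tau [Ht ->]]. simpl.
  set (d := owner G w).
  set (s' := fun l x => tau (skipn (length h) l) x).
  assert (Hs' : is_strategy G d s') by (intros l x Hx; apply Ht; auto).
  specialize (Hs h w Hh d s' Hs'). rewrite !PI in Hs.
  replace (upd G (residual G s h) d tau) with (residual G (upd G s d s') h); [exact Hs|].
  unfold residual, upd, s'. do 3 (apply functional_extensionality; intro).
  destruct (Pl_eq_dec G x d); auto. now rewrite skipn_len_app.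
Qed.

(* lamSPE is an eps-fixed point: the continuation of an SPE after h·w is
   itself a lamSPE-rational environment for the owner of w. *)
Lemma lamSPE_fixed : eps_fixed_point G eps lamSPE.
Proof.
  intros w. split.
  - eapply Rbar_le_trans; [apply minus_le; auto | apply nego_ge].
  - apply glb_plus_ge. intros x [u [s [h [Hs [Hh ->]]]]].
    eapply Rbar_le_trans; [|apply (spe_best_response u s h w Hs Hh)].
    apply glb_lb. exists (residual G s h). split; [|reflexivity]. split.
    + intros j _ l x Hx. now apply (proj1 Hs j).
    + exists (residual G s h (owner G w)). split.
      * intros l x Hx. now apply (proj1 Hs).
      * intros h' w' Hh' _. rewrite upd_self, residual_app.
        apply (spe_continuation_consistent u); [exact Hs | eapply hist_join; eauto].
Qed.

Lemma spe_outcome_consistent lam v0 xi : least_eps_fixed_point G eps lam ->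
  (exists s, is_eps_SPE G eps v0 s /\ forall n, outcome G s v0 n = xi n) ->
  consistent G lam xi.
Proof.
  intros [_ Hleast] [s [Hs Hout]] n.
  assert (Hxi : xi = outcome G (residual G s []) v0).
  { apply functional_extensionality. intro k. now rewrite <- Hout. }
  eapply Rbar_le_trans; [apply (Hleast lamSPE lamSPE_fixed)|].
  rewrite Hxi. apply (spe_continuation_consistent v0 s [] v0 Hs (hist_nil G v0) n).
Qed.

End SPEOutcomes.

Lemma first_exit (P : nat -> Prop) N0 : P N0 ->
  (forall k, (N0 <= k)%nat -> P k) \/
  exists N, (N0 <= N)%nat /\ (forall k, (N0 <= k <= N)%nat -> P k) /\ ~ P (S N).
Proof.
  intros H0.
  destruct (classic (forall k, (N0 <= k)%nat -> P k)) as [Hall|Hex]; [now left|right].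
  assert (Hm : forall m, (forall k, (N0 <= k <= N0 + m)%nat -> P k) \/
      exists N, (N0 <= N)%nat /\ (forall k, (N0 <= k <= N)%nat -> P k) /\ ~ P (S N)).
  { induction m as [|m [IH|IH]]; [left; intros k Hk; now replace k with N0 by lia | | now right].
    destruct (classic (P (S (N0 + m)))) as [HP|HnP].
    - left. intros k Hk. destruct (Nat.eq_dec k (N0 + S m)) as [->|]; [now rewrite Nat.add_succ_r|].
      apply IH. lia.
    - right. exists (N0 + m)%nat. repeat split; auto. lia. }
  apply not_all_ex_not in Hex. destruct Hex as [K HK].
  destruct (Hm (K - N0)%nat) as [Hl|Hr]; [|exact Hr].
  exfalso. apply HK. intros HK0. apply Hl. lia.
Qed.

Section Rank.
Variable G : game.
Variable f : V G -> Rbar.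

(* rank u: the number of vertices with an f-value strictly below f u; it
   is a natural-number measure for descending chains of f-values. *)
Definition rank_list : list (V G) :=
  proj1_sig (constructive_indefinite_description _ (V_fin G)).

Lemma rank_list_full x : In x rank_list.
Proof. unfold rank_list. destruct (constructive_indefinite_description _ _) as [l Hl]. apply Hl. Qed.

Definition below (u w : V G) : bool :=
  if Rbar_lt_dec (f w) (f u) then true else false.

Definition rank (u : V G) : nat := length (filter (below u) rank_list).

Lemma filter_length_lt {A} (p q : A -> bool) l a : (forall x, p x = true -> q x = true) ->
  In a l -> q a = true -> p a = false -> (length (filter p l) < length (filter q l))%nat.
Proof.
  intros H Ha Hq Hp.
  assert (Hle : forall l', (length (filter p l') <= length (filter q l'))%nat).
  { induction l' as [|b l' IH]; simpl; auto.
    destruct (p b) eqn:E1, (q b) eqn:E2; simpl; try lia. rewrite H in E2 by auto. discriminate. }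
  induction l as [|b l IH]; simpl in *; [contradiction|].
  destruct Ha as [->|Ha].
  - rewrite Hp, Hq. simpl. specialize (Hle l). lia.
  - specialize (IH Ha). destruct (p b) eqn:E1, (q b) eqn:E2; simpl; try lia.
    rewrite H in E2 by auto. discriminate.
Qed.

Lemma rank_lt u' u : Rbar_lt (f u') (f u) -> (rank u' < rank u)%nat.
Proof.
  intros Hlt. apply filter_length_lt with (a := u'); [| apply rank_list_full | |]; unfold below.
  - intros x. destruct (Rbar_lt_dec (f x) (f u')) as [H1|]; [|discriminate].
    destruct (Rbar_lt_dec (f x) (f u)) as [|H2]; auto. exfalso. apply H2. eapply Rbar_lt_trans; eauto.
  - now destruct (Rbar_lt_dec (f u') (f u)).
  - destruct (Rbar_lt_dec (f u') (f u')) as [H1|]; auto.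
    exfalso. exact (Rbar_lt_not_le _ _ H1 (Rbar_le_refl _)).
Qed.

End Rank.

Section Construction.
Variable G : game.
Variable eps : R.
Variable lam : requirement G.
Variable xi : nat -> V G.
Variable v0 : V G.
Hypothesis PI : prefix_independent G.
Hypothesis Heps : 0 <= eps.
Hypothesis Hfix : eps_fixed_point G eps lam.
Hypothesis Hxi : is_play G xi.
Hypothesis Hx0 : xi 0%nat = v0.
Hypothesis Hsteady : steady_negotiation G.
Hypothesis Hcons : consistent G lam xi.

Definition optimal_punishment (u : V G) (p : profile G * strat G) : Prop :=
  let d := owner G u in
  is_profile_minus G d (fst p) /\ is_strategy G d (snd p) /\
  (forall h w, is_hist G u h w -> compatible_minus G d (fst p) (h ++ [w]) ->
     consistent G lam (outcome G (residual G (upd G (fst p) d (snd p)) h) w)) /\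
  (forall x, nego_set G lam d u x -> Rbar_le (best_resp_val G d u (fst p)) x).

Definition punishment (u : V G) : profile G * strat G :=
  match excluded_middle_informative (exists p, optimal_punishment u p) with
  | left H => proj1_sig (constructive_indefinite_description _ H)
  | right _ => (fun _ _ x => x, fun _ x => x)
  end.

Lemma punishment_optimal u :
  (exists p, optimal_punishment u p) -> optimal_punishment u (punishment u).
Proof.
  intros H. unfold punishment. destruct (excluded_middle_informative _); [|contradiction].
  destruct (constructive_indefinite_description _ _). auto.
Qed.

(* Steady negotiation: where nego is below +oo the infimum is attained. *)
Lemma optimal_punishment_exists u :
  Rbar_lt (nego G lam u) p_infty -> exists p, optimal_punishment u p.
Proof.
  intros H. apply glb_lt_inhabited in H.
  destruct (Hsteady (owner G u) u lam) as [He|[m [Hm Hmin]]].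
  - destruct H as [x Hx]. exfalso. exact (He x Hx).
  - destruct Hm as [sg [[Hp [tau [Ht Hc]]] ->]]. exists (sg, tau). repeat split; simpl; auto.
Qed.

Lemma punishment_value u : optimal_punishment u (punishment u) ->
  best_resp_val G (owner G u) u (fst (punishment u)) = nego G lam u.
Proof.
  intros [H1 [H2 [H3 H4]]]. apply Rbar_le_antisym.
  - apply glb_greatest. auto.
  - apply glb_lb. exists (fst (punishment u)). split; [|reflexivity].
    split; [auto | exists (snd (punishment u)); auto].
Qed.

Definition punish_profile (u : V G) : profile G :=
  upd G (fst (punishment u)) (owner G u) (snd (punishment u)).

Lemma punish_profile_ok u : optimal_punishment u (punishment u) -> is_profile G (punish_profile u).
Proof.
  intros [H1 [H2 _]] j H x Hx. unfold punish_profile, upd.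
  destruct (Pl_eq_dec G j (owner G u)) as [->|Hne]; [now apply H2 | now apply H1].
Qed.

(* The profile is driven by a mode: follow xi, or Punish u o, the optimal
   punishment of the owner of u, started when the history reached u at
   position o. *)
Inductive mode := Follow | Punish (u : V G) (o : nat).

Definition mode_profile (m : mode) : profile G :=
  match m with Follow => fun _ l _ => xi (S (length l)) | Punish u _ => punish_profile u end.

Definition mode_start (m : mode) : nat := match m with Follow => 0%nat | Punish _ o => o end.

Definition recommended (m : mode) (h : list (V G)) (w : V G) : V G :=
  mode_profile m (owner G w) (skipn (mode_start m) h) w.

Definition next_mode (m : mode) (h : list (V G)) (w y : V G) : mode :=
  if excluded_middle_informative (y = recommended m h w) then m else
  match m with
  | Punish u o =>
      if Pl_eq_dec G (owner G u) (owner G w) then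
        (if Rbar_lt_dec (nego G lam w) (nego G lam u) then Punish w (length h) else m)
      else Punish w (length h)
  | Follow => Punish w (length h)
  end.

(* Modes computed on the reversed history, so that the recursion peels off
   the most recent move. *)
Fixpoint mode_rev (rh : list (V G)) (w : V G) : mode :=
  match rh with [] => Follow | w' :: rh' => next_mode (mode_rev rh' w') (rev rh') w' w end.

Definition mode_at (h : list (V G)) (w : V G) : mode := mode_rev (rev h) w.

Lemma mode_at_snoc h w' w : mode_at (h ++ [w']) w = next_mode (mode_at h w') h w' w.
Proof. unfold mode_at. rewrite rev_app_distr. simpl. now rewrite rev_involutive. Qed.

Lemma next_mode_follow m h w y : y = recommended m h w -> next_mode m h w y = m.
Proof. intros Hy. unfold next_mode. now destruct (excluded_middle_informative _). Qed.

Lemma next_mode_deviation m h w y : y <> recommended m h w ->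
  exists u o, next_mode m h w y = Punish u o /\ owner G u = owner G w /\
    Rbar_le (nego G lam u) (nego G lam w).
Proof.
  intros Hy. unfold next_mode. destruct (excluded_middle_informative _); [contradiction|].
  destruct m as [|u o]; [exists w, (length h); auto using Rbar_le_refl|].
  destruct (Pl_eq_dec G (owner G u) (owner G w)) as [Eq|];
    [destruct (Rbar_lt_dec (nego G lam w) (nego G lam u)) as [|Hge]|].
  - exists w, (length h). auto using Rbar_le_refl.
  - exists u, o. auto using Rbar_not_lt_le.
  - exists w, (length h). auto using Rbar_le_refl.
Qed.

Lemma next_mode_escalate u o h w y : owner G u = owner G w ->
  next_mode (Punish u o) h w y <> Punish u o ->
  next_mode (Punish u o) h w y = Punish w (length h) /\ Rbar_lt (nego G lam w) (nego G lam u).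
Proof.
  intros Hown Hch. unfold next_mode in *. destruct (excluded_middle_informative _); [contradiction|].
  destruct (Pl_eq_dec G (owner G u) (owner G w)); [|contradiction].
  destruct (Rbar_lt_dec (nego G lam w) (nego G lam u)); [auto | contradiction].
Qed.

(* The candidate eps-SPE: everybody plays the recommended move (or an
   arbitrary legal one where it is illegal, which never happens on
   histories of G_{|v0}). *)
Definition choice (h : list (V G)) (w : V G) : V G :=
  let r := recommended (mode_at h w) h w in
  if excluded_middle_informative (E G w r) then r else default_succ G w.

Definition sigma : profile G := fun _ => choice.

Lemma sigma_profile : is_profile G sigma.
Proof.
  intros j H x _. unfold sigma, choice.
  destruct (excluded_middle_informative _); [auto | apply default_succ_edge].
Qed.

Definition well_moded (h : list (V G)) (w : V G) : Prop :=
  is_hist G v0 h w /\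
  match mode_at h w with
  | Follow => h ++ [w] = pref G xi (S (length h))
  | Punish u o => (o <= length h)%nat /\ nth_error (h ++ [w]) o = Some u /\
      optimal_punishment u (punishment u) /\
      compatible_minus G (owner G u) (fst (punishment u)) (skipn o (h ++ [w]))
  end.

Lemma pref_snoc_inv g n h w : h ++ [w] = pref G g (S n) -> w = g n /\ length h = n.
Proof.
  intros H. split.
  - rewrite pref_S in H. now apply app_inj_tail in H.
  - apply (f_equal (@length _)) in H. rewrite length_app, pref_length in H. simpl in H. lia.
Qed.

Lemma mode_start_le h w : well_moded h w -> (mode_start (mode_at h w) <= length h)%nat.
Proof. intros [_ Hs]. destruct (mode_at h w); simpl; [lia | apply Hs]. Qed.

Lemma recommended_edge h w : well_moded h w -> E G w (recommended (mode_at h w) h w).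
Proof.
  intros [_ Hs]. unfold recommended. destruct (mode_at h w) as [|u o]; simpl.
  - destruct (pref_snoc_inv _ _ _ _ Hs) as [-> _]. apply Hxi.
  - apply punish_profile_ok; [apply Hs | reflexivity].
Qed.

Lemma sigma_recommended j h w : well_moded h w -> sigma j h w = recommended (mode_at h w) h w.
Proof.
  intros Hi. unfold sigma, choice. destruct (excluded_middle_informative _) as [|Hn]; auto.
  exfalso. now apply Hn, recommended_edge.
Qed.

Definition planned_play (h : list (V G)) (w : V G) : nat -> V G :=
  outcome G (residual G (mode_profile (mode_at h w)) (skipn (mode_start (mode_at h w)) h)) w.

Lemma follow_outcome h m :
  outcome G (residual G (mode_profile Follow) h) (xi (length h)) m = xi (length h + m)%nat.
Proof.
  induction m as [|m IH]; [now rewrite Nat.add_0_r|].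
  rewrite outcome_S. unfold residual. simpl. rewrite length_app, pref_length. f_equal. lia.
Qed.

(* The planned continuation is lam-consistent: it is a suffix of xi, or the
   play of a lam-rational punishment after a history compatible with it. *)
Lemma planned_play_consistent h w : well_moded h w -> consistent G lam (planned_play h w).
Proof.
  intros [Hh Hs]. unfold planned_play. destruct (mode_at h w) as [|u o].
  - destruct (pref_snoc_inv _ _ _ _ Hs) as [-> _]. intros n.
    change (skipn (mode_start Follow) h) with h. rewrite follow_outcome.
    replace (shift G (outcome G (residual G (mode_profile Follow) h) (xi (length h))) n)
      with (shift G xi (length h + n)); [apply (Hcons (length h + n)%nat)|].
    apply functional_extensionality. intro k. unfold shift. rewrite follow_outcome. f_equal. lia.
  - destruct Hs as [Ho [Hu [Hsp Hc]]]. simpl. rewrite skipn_app_le in Hc by auto.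
    apply Hsp; [split | exact Hc].
    + rewrite <- skipn_app_le by auto. now apply skipn_path, Hh.
    + rewrite <- skipn_app_le by auto. now rewrite skipn_hd.
Qed.

Lemma planned_play_requirement h w : well_moded h w ->
  Rbar_le (lam w) (Finite (mu G (planned_play h w) (owner G w))).
Proof. intros Hi. exact (planned_play_consistent h w Hi 0%nat). Qed.

Lemma punishment_start_ok h w y : well_moded h w -> E G w y ->
  (length h <= length (h ++ [w]))%nat /\ nth_error ((h ++ [w]) ++ [y]) (length h) = Some w /\
  optimal_punishment w (punishment w) /\
  compatible_minus G (owner G w) (fst (punishment w)) (skipn (length h) ((h ++ [w]) ++ [y])).
Proof.
  intros Hi Hy. rewrite <- app_assoc, skipn_len_app. split; [|split; [|split]].
  - rewrite length_app. lia.
  - rewrite nth_error_app2 by lia. now rewrite Nat.sub_diag.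
  - apply punishment_optimal, optimal_punishment_exists.
    apply (Rbar_le_lt_trans _ (Finite (mu G (planned_play h w) (owner G w) + eps))); [|exact I].
    apply (nego_fixed_le G eps lam w _ Hfix). now apply planned_play_requirement.
  - intros [|[|k]] x z Hx Hz Ho; simpl in Hx, Hz; try discriminate. inversion Hx. now subst.
Qed.

Lemma well_moded_step h w y : well_moded h w -> E G w y -> well_moded (h ++ [w]) y.
Proof.
  intros Hi Hy. pose proof Hi as [Hh Hs]. split; [eapply hist_join; eauto; now apply hist_one|].
  rewrite mode_at_snoc. unfold next_mode. destruct (mode_at h w) as [|u o] eqn:Est.
  - destruct (excluded_middle_informative _) as [Er|Er]; [|now apply punishment_start_ok].
    unfold recommended in Er. simpl in Er.
    rewrite length_app, Nat.add_1_r, pref_S, <- Hs, Er. reflexivity.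
  - destruct Hs as [Ho [Hu [Hsp Hc]]].
    assert (Keep : (owner G w <> owner G u -> y = fst (punishment u) (owner G w) (skipn o h) w) ->
      (o <= length (h ++ [w]))%nat /\ nth_error ((h ++ [w]) ++ [y]) o = Some u /\
      optimal_punishment u (punishment u) /\
      compatible_minus G (owner G u) (fst (punishment u)) (skipn o ((h ++ [w]) ++ [y]))).
    { intros Hyy. split; [|split; [|split]]; auto.
      - rewrite length_app. lia.
      - rewrite nth_error_app1; auto. rewrite length_app. simpl. lia.
      - rewrite <- app_assoc, skipn_app_le by auto. rewrite skipn_app_le in Hc by auto.
        now apply compat_snoc. }
    destruct (excluded_middle_informative _) as [Er|Er].
    + apply Keep. intros Hn. rewrite Er. unfold recommended. simpl. unfold punish_profile, upd.
      destruct (Pl_eq_dec G (owner G w) (owner G u)); [contradiction | reflexivity].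
    + destruct (Pl_eq_dec G (owner G u) (owner G w)); [|now apply punishment_start_ok].
      destruct (Rbar_lt_dec _ _); [now apply punishment_start_ok | apply Keep; congruence].
Qed.

Lemma well_moded_hist h w : is_hist G v0 h w -> well_moded h w.
Proof.
  revert w. induction h as [|w' h IH] using rev_ind; intros w Hh.
  - destruct Hh as [_ Hd]. simpl in Hd. inversion Hd; subst.
    split; [apply hist_nil|]. unfold pref. simpl. now rewrite Hx0.
  - apply hist_snoc_inv in Hh. destruct Hh as [Hh He]. apply well_moded_step; auto.
Qed.

Lemma well_moded_along s h w : well_moded h w -> is_profile G s -> forall m,
  well_moded (pref G (play_after G s h w) (length h + m)) (play_after G s h w (length h + m)).
Proof.
  intros Hi Hs m. induction m as [|m IH].
  - now rewrite Nat.add_0_r, play_after_pref0, play_after_len.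
  - rewrite Nat.add_succ_r, pref_S. apply well_moded_step; auto.
    rewrite play_after_rec by lia. now apply Hs.
Qed.

Lemma sigma_keeps_mode h w : well_moded h w -> forall m,
  mode_at (pref G (play_after G sigma h w) (length h + m)) (play_after G sigma h w (length h + m))
  = mode_at h w.
Proof.
  intros Hi m. set (g := play_after G sigma h w). induction m as [|m IH].
  - rewrite Nat.add_0_r. unfold g. now rewrite play_after_pref0, play_after_len.
  - rewrite Nat.add_succ_r, pref_S, mode_at_snoc, IH. apply next_mode_follow.
    unfold g. rewrite play_after_rec by lia. fold g. rewrite <- IH.
    apply sigma_recommended, (well_moded_along sigma h w Hi sigma_profile).
Qed.

Lemma sigma_follows_mode h w N : well_moded h w -> (length h <= N)%nat ->
  play_after G sigma h w (S N) =
  recommended (mode_at h w) (pref G (play_after G sigma h w) N) (play_after G sigma h w N).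
Proof.
  intros Hi HN. replace N with (length h + (N - length h))%nat by lia.
  rewrite play_after_rec by lia.
  rewrite sigma_recommended by apply (well_moded_along sigma h w Hi sigma_profile).
  now rewrite sigma_keeps_mode.
Qed.

Lemma sigma_play_planned h w : well_moded h w ->
  forall k, play_after G sigma h w k = app_play G h (planned_play h w) k.
Proof.
  intros Hi. pose proof (mode_start_le h w Hi) as Ho.
  assert (A1 : forall r j, app_play G h r (length h + j)%nat = r j).
  { intros r j. unfold app_play. rewrite (proj2 (nth_error_None h _)) by lia. f_equal. lia. }
  apply (rec_unique G (fun H x => mode_profile (mode_at h w) (owner G x)
            (skipn (mode_start (mode_at h w)) H) x) _ _ (length h)).
  - intros k Hk. destruct (Nat.ltb_spec k (length h)).
    + unfold play_after, app_play. destruct (nth_error h k) eqn:E; auto.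
      apply nth_error_None in E. lia.
    + replace k with (length h + 0)%nat by lia. now rewrite play_after_ge, A1.
  - intros N HN. now apply sigma_follows_mode.
  - intros N HN. replace N with (length h + (N - length h))%nat by lia. set (m := (N - length h)%nat).
    assert (A2 : pref G (app_play G h (planned_play h w)) (length h + m) = h ++ pref G (planned_play h w) m).
    { rewrite pref_add. f_equal.
      - apply nth_error_ext. intros k. destruct (Nat.ltb_spec k (length h)).
        + rewrite pref_nth by auto. unfold app_play. destruct (nth_error h k) eqn:E; auto.
          apply nth_error_None in E. lia.
        + rewrite pref_nth_none by lia. symmetry. apply nth_error_None. lia.
      - apply pref_ext. intros k _. apply A1. }
    rewrite <- Nat.add_succ_r, !A1, A2, skipn_app_le by auto.
    unfold planned_play at 1. now rewrite outcome_S.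
Qed.

Lemma sigma_play_requirement h w : well_moded h w ->
  Rbar_le (lam w) (Finite (mu G (play_after G sigma h w) (owner G w))).
Proof.
  intros Hi. replace (play_after G sigma h w) with (app_play G h (planned_play h w)).
  - rewrite PI. now apply planned_play_requirement.
  - apply functional_extensionality. intro k. symmetry. now apply sigma_play_planned.
Qed.

Lemma sigma_play_requirement_along h w N : well_moded h w -> (length h <= N)%nat ->
  Rbar_le (lam (play_after G sigma h w N))
    (Finite (mu G (play_after G sigma h w) (owner G (play_after G sigma h w N)))).
Proof.
  intros Hi HN. set (g := play_after G sigma h w).
  replace g with (play_after G sigma (pref G g N) (g N)) at 2.
  - apply sigma_play_requirement.
    replace N with (length h + (N - length h))%nat by lia.
    now apply well_moded_along, sigma_profile.
  - apply functional_extensionality. intro k. now apply play_after_restart.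
Qed.

Section Deviation.
Variable h : list (V G).
Variable v : V G.
Variable i : Pl G.
Variable s' : strat G.
Hypothesis Hh : is_hist G v0 h v.
Hypothesis Hs' : is_strategy G i s'.

Let gd := play_after G (upd G sigma i s') h v.
Let gp := play_after G sigma h v.
Let dmode N := mode_at (pref G gd N) (gd N).

Lemma deviation_well_moded N : (length h <= N)%nat -> well_moded (pref G gd N) (gd N).
Proof.
  intros HN. replace N with (length h + (N - length h))%nat by lia.
  apply well_moded_along; [now apply well_moded_hist | apply is_profile_upd; [apply sigma_profile | exact Hs']].
Qed.

Lemma deviation_edges k : E G (gd k) (gd (S k)).
Proof. apply (play_after_edges G _ v0 h v Hh). apply is_profile_upd; [apply sigma_profile | exact Hs']. Qed.

Lemma others_obey N : (length h <= N)%nat -> owner G (gd N) <> i ->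
  gd (S N) = recommended (dmode N) (pref G gd N) (gd N).
Proof.
  intros HN Ho. unfold gd. rewrite play_after_rec by auto. fold gd. unfold upd.
  destruct (Pl_eq_dec G _ i); [contradiction|]. now apply sigma_recommended, deviation_well_moded.
Qed.

Lemma dmode_S N : dmode (S N) = next_mode (dmode N) (pref G gd N) (gd N) (gd (S N)).
Proof. unfold dmode. now rewrite pref_S, mode_at_snoc. Qed.

(* If i stays punished by Punish u o forever, his payoff is at most nego u:
   from position o on, gd is compatible with the punishing environment. *)
Lemma permanent_punishment_bound u o N : (length h <= N)%nat -> owner G u = i ->
  (forall k, (N <= k)%nat -> dmode k = Punish u o) ->
  Rbar_le (Finite (mu G gd i)) (nego G lam u).
Proof.
  intros HN Hou Hall.
  pose proof (deviation_well_moded N HN) as [_ HI]. fold (dmode N) in HI.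
  rewrite (Hall N (le_n N)) in HI. destruct HI as [Ho [Hu [Hsp _]]].
  rewrite pref_length in Ho. rewrite <- pref_S, pref_nth in Hu by lia. injection Hu as Hgu.
  rewrite <- (mu_shift G PI gd o i), <- (punishment_value u Hsp), Hou.
  apply compatible_play_le_best_resp.
  - intros m. unfold shift. rewrite Nat.add_succ_r. apply deviation_edges.
  - unfold shift. now rewrite Nat.add_0_r.
  - intros m Hm.
    pose proof (deviation_well_moded (N + S m)%nat ltac:(lia)) as [_ HI]. fold (dmode (N + S m)%nat) in HI.
    rewrite (Hall (N + S m)%nat ltac:(lia)) in HI. destruct HI as [_ [_ [_ Hc]]].
    rewrite <- pref_S, skipn_pref in Hc by lia.
    rewrite <- (firstn_pref G (shift G gd o) m (S (N + S m) - o)) by lia.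
    apply (Hc m); [apply pref_nth; lia | apply pref_nth; lia | now rewrite Hou].
Qed.

(* Once i is punished by Punish u o, his payoff is at most nego u: the
   punishment is permanent, or escalates to a vertex of smaller negotiated
   value, which can happen only finitely often (induction on the rank). *)
Lemma punished_deviator_bound n : forall u o N, (rank G (nego G lam) u < n)%nat ->
  (length h <= N)%nat -> dmode N = Punish u o -> owner G u = i ->
  Rbar_le (Finite (mu G gd i)) (nego G lam u).
Proof.
  induction n as [|n IH]; intros u o N Hr HN HS Hou; [lia|].
  destruct (first_exit (fun k => dmode k = Punish u o) N HS) as [Hall|[M [HM [Hupto Hexit]]]].
  - exact (permanent_punishment_bound u o N HN Hou Hall).
  - pose proof (Hupto M (conj HM (le_n M))) as HSM. simpl in HSM, Hexit.
    assert (Hown : owner G (gd M) = i).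
    { destruct (Pl_eq_dec G (owner G (gd M)) i) as [|Hne]; auto. exfalso. apply Hexit.
      rewrite dmode_S, HSM. apply next_mode_follow. rewrite <- HSM. apply others_obey; [lia | auto]. }
    rewrite dmode_S, HSM in Hexit.
    destruct (next_mode_escalate u o _ _ _ (eq_trans Hou (eq_sym Hown)) Hexit) as [Hnext Hlt].
    eapply Rbar_le_trans; [|apply Rbar_lt_le, Hlt].
    apply (IH (gd M) (length (pref G gd M)) (S M)); [| lia | now rewrite dmode_S, HSM | exact Hown].
    pose proof (rank_lt G (nego G lam) _ _ Hlt). lia.
Qed.

(* Deviating from sigma after h·v gains player i at most eps: either gd
   never leaves sigma's play, or i deviates at some vertex gd N and is then
   punished at a value at most nego (gd N) <= lam (gd N) + eps, while
   sigma's play already gives him at least lam (gd N). *)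
Lemma deviation_gain_bounded : mu G gd i <= mu G gp i + eps.
Proof.
  pose proof (well_moded_hist h v Hh) as Hi.
  assert (Hpre : forall j, (j < length h)%nat -> gd j = gp j).
  { intros j Hj. pose proof (play_after_lt G (upd G sigma i s') h v j Hj) as E1.
    pose proof (play_after_lt G sigma h v j Hj) as E2. fold gd in E1. fold gp in E2. congruence. }
  set (P := fun k => (forall j, (j <= k)%nat -> gd j = gp j) /\ dmode k = mode_at h v).
  assert (HP0 : P (length h)).
  { split.
    - intros j Hj. destruct (Nat.eq_dec j (length h)) as [->|]; [|apply Hpre; lia].
      unfold gd, gp. now rewrite !play_after_len.
    - unfold dmode, gd. now rewrite play_after_pref0, play_after_len. }
  destruct (first_exit P (length h) HP0) as [Hall|[N [HN [Hupto Hexit]]]].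
  - replace gd with gp; [lra|]. apply functional_extensionality. intro k.
    symmetry. apply (proj1 (Hall (Nat.max k (length h)) (Nat.le_max_r _ _))). lia.
  - destruct (Hupto N (conj HN (le_n N))) as [Hagree HmodeN].
    assert (Hpref : pref G gd N = pref G gp N) by (apply pref_ext; intros; apply Hagree; lia).
    assert (Hdev : gd (S N) <> recommended (dmode N) (pref G gd N) (gd N)).
    { intros Hrec. apply Hexit. split.
      - intros j Hj. destruct (Nat.eq_dec j (S N)) as [->|]; [|apply Hagree; lia].
        rewrite Hrec, HmodeN, Hpref, (Hagree N (le_n N)). symmetry. now apply sigma_follows_mode.
      - rewrite dmode_S, next_mode_follow; auto. }
    assert (Hown : owner G (gd N) = i).
    { destruct (Pl_eq_dec G (owner G (gd N)) i) as [|Hne]; auto.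
      exfalso. apply Hdev, others_obey; auto. }
    destruct (next_mode_deviation _ _ _ _ Hdev) as [u [o [Hnext [Hou Hle]]]].
    assert (Hreq : Rbar_le (lam (gd N)) (Finite (mu G gp i))).
    { rewrite <- Hown, (Hagree N (le_n N)). now apply sigma_play_requirement_along. }
    pose proof (punished_deviator_bound (S (rank G (nego G lam) u)) u o (S N)
                  (Nat.lt_succ_diag_r _) ltac:(lia) ltac:(now rewrite dmode_S) (eq_trans Hou Hown)) as Hb.
    pose proof (Rbar_le_trans _ _ _ Hb (Rbar_le_trans _ _ _ Hle
                  (nego_fixed_le G eps lam (gd N) _ Hfix Hreq))) as Hf.
    exact Hf.
Qed.

End Deviation.

Lemma sigma_is_spe : is_eps_SPE G eps v0 sigma.
Proof.
  split; [apply sigma_profile|]. intros h v Hh i s' Hs'. exact (deviation_gain_bounded h v i s' Hh Hs').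
Qed.

Lemma sigma_outcome n : outcome G sigma v0 n = xi n.
Proof.
  rewrite <- play_after_nil, sigma_play_planned by apply well_moded_hist, hist_nil.
  unfold app_play, planned_play. rewrite nth_error_nil, Nat.sub_0_r, <- Hx0.
  exact (follow_outcome [] n).
Qed.

End Construction.

Theorem theorem2 (G : game) (v0 : V G) (eps : R) (lamstar : requirement G)
  (xi : nat -> V G) :
  prefix_independent G ->
  0 <= eps ->
  least_eps_fixed_point G eps lamstar ->
  is_play G xi -> xi 0%nat = v0 ->
  ((exists s : profile G, is_eps_SPE G eps v0 s /\ forall n, outcome G s v0 n = xi n) ->
     consistent G lamstar xi) /\
  (steady_negotiation G -> consistent G lamstar xi ->
     exists s : profile G, is_eps_SPE G eps v0 s /\ forall n, outcome G s v0 n = xi n).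
Proof.
  intros PI Heps [Hfix Hleast] Hxi Hx0. split.
  - apply (spe_outcome_consistent G eps PI Heps). split; assumption.
  - intros Hsteady Hcons. exists (sigma G lamstar xi). split.
    + exact (sigma_is_spe G eps lamstar xi v0 PI Heps Hfix Hxi Hx0 Hsteady Hcons).
    + exact (sigma_outcome G eps lamstar xi v0 Hfix Hxi Hx0 Hsteady Hcons).
Qed.
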